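(* Let $k>t+1$, $n>2k-t$, and let $\mathcal{S}_p$ be a maximal set of $k$-spaces in $\mathrm{PG}(n,q)$ pairwise intersecting in at least a $t$-space. Let $\psi(\mathcal{S}_p)=\min\{\dim T: T\text{ a subspace of }\mathrm{PG}(n,q),\ \dim(T\cap\alpha)\geq t\ \forall\alpha\in\mathcal{S}_p\}$ and let $\mathcal{T}$ be the set of all $\psi(\mathcal{S}_p)$-dimensional subspaces meeting every element of $\mathcal{S}_p$ in at least a $t$-space. Then: (1) $t\leq\psi(\mathcal{S}_p)\leq k$, and if $\psi(\mathcal{S}_p)=t$ then $\mathcal{S}_p$ is a $t$-pencil; (2) if $T\in\mathcal{T}$, then all $k$-spaces containing $T$ belong to $\mathcal{S}_p$; (3) any two elements of $\mathcal{T}$ intersect in at least a $t$-space.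
   Context: Dimensions are projective; ''intersect in at least a $t$-space'' means the intersection has dimension at least $t$. Maximal means no further $k$-space can be added keeping the property. A $t$-pencil is the set of all $k$-spaces through a fixed $t$-space. *)

From HB Require Import structures.
From mathcomp Require Import all_boot all_order all_algebra all_field.
Set Implicit Arguments. Unset Strict Implicit. Unset Printing Implicit Defensive.
Import GRing.Theory.
Local Open Scope ring_scope.

(* PG(n,q) is modelled by the vector space 'rV[F]_(n.+1) over a finite field F
   (q = #|F|).  A projective d-space is a vector subspace of (vector)
   dimension d+1.  Projective dimension of U is \dim U - 1. *)

Notation PGspace F n := {vspace 'rV[F]_(n.+1)}.

Definition is_kspace (F : finFieldType) (n k : nat) (U : PGspace F n) : Prop :=
  \dim U = k.+1.

Definition meet_t (F : finFieldType) (n t : nat) (U V : PGspace F n) : Prop :=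
  (t.+1 <= \dim (U :&: V))%N.

Definition t_intersecting (F : finFieldType) (n k t : nat)
    (S : PGspace F n -> Prop) : Prop :=
  (forall U, S U -> is_kspace k U) /\
  (forall U V, S U -> S V -> meet_t t U V).

Definition maximal_t_intersecting (F : finFieldType) (n k t : nat)
    (S : PGspace F n -> Prop) : Prop :=
  t_intersecting k t S /\
  (forall B, is_kspace k B -> ~ S B ->
     ~ t_intersecting k t (fun U => S U \/ U = B)).

Definition meets_all (F : finFieldType) (n t : nat)
    (S : PGspace F n -> Prop) (T : PGspace F n) : Prop :=
  forall A, S A -> meet_t t T A.

Definition is_psi (F : finFieldType) (n t : nat)
    (S : PGspace F n -> Prop) (p : nat) : Prop :=
  (exists T, \dim T = p.+1 /\ meets_all t S T) /\
  (forall T, meets_all t S T -> (p.+1 <= \dim T)%N).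

Definition calT (F : finFieldType) (n t : nat)
    (S : PGspace F n -> Prop) (p : nat) (T : PGspace F n) : Prop :=
  \dim T = p.+1 /\ meets_all t S T.

Definition is_t_pencil (F : finFieldType) (n k t : nat)
    (S : PGspace F n -> Prop) : Prop :=
  exists T0 : PGspace F n, \dim T0 = t.+1 /\
    (forall U, S U <-> (is_kspace k U /\ (T0 <= U)%VS)).

(* Maximality of S means that a k-space belongs to S as soon as it meets every
   member of S in at least a t-space, and this property passes to
   superspaces; hence every k-space through an element of calT lies in S,
   and when psi = t the t-space of calT is contained in every member of S.
   Every member of S meets all members, so psi <= k.  If two elements of calT
   met in less than a t-space, they could be enlarged to k-spaces, by adding
   points outside the span so far, without enlarging their intersection
   beyond a t-space (this is where n > 2k - t is used); both k-spaces would
   lie in S, contradicting pairwise t-intersection. *)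

From HB Require Import structures.
From mathcomp Require Import all_boot all_order all_algebra all_field.
From mathcomp Require Import zify.
From Stdlib Require Import Classical.

Set Implicit Arguments.
Unset Strict Implicit.
Unset Printing Implicit Defensive.

Section Extension.
Variables (K : fieldType) (vT : vectType K).
Implicit Types (U V W T : {vspace vT}) (v : vT).

Lemma dim_addv_line U v : v \notin U -> \dim (U + <[v]>)%VS = (\dim U).+1.
Proof.
move=> vU; have /dimv_leqif_sup geU := addvSl U <[v]>.
have ltU : \dim U < \dim (U + <[v]>) by rewrite (ltn_leqif geU) subv_add subvv.
have := dimv_sum_cap U <[v]>; rewrite dim_vline.
by case: (v != 0%R) => /=; lia.
Qed.

Lemma vpick_compl_notin U : \dim U < \dim {:vT} -> vpick U^C \notin U.
Proof.
move=> ltU; apply/negP => vU.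
have : vpick U^C \in (U :&: U^C)%VS by rewrite memv_cap vU memv_pick.
rewrite capv_compl memv0 vpick0 -dimv_eq0 dimv_compl; lia.
Qed.

Lemma extend_subspace1 U V : \dim U < \dim {:vT} ->
  exists2 W, (U <= W)%VS &
    \dim W = (\dim U).+1 /\ minn (\dim {:vT}) (\dim (U + V)).+1 <= \dim (W + V).
Proof.
move=> ltU; case: (ltnP (\dim (U + V)) (\dim {:vT})) => [ltUV | geUV].
- have vUV := vpick_compl_notin ltUV; set v := vpick _ in vUV.
  have vU : v \notin U by apply: contra vUV => /(subvP (addvSl U V)).
  exists (U + <[v]>)%VS; first exact: addvSl.
  split; first exact: dim_addv_line.
  have -> : (U + <[v]> + V = U + V + <[v]>)%VS by rewrite -!addvA [(<[v]> + V)%VS]addvC.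
  by rewrite dim_addv_line // geq_minr.
- exists (U + <[vpick U^C]>)%VS; first exact: addvSl.
  split; first exact/dim_addv_line/vpick_compl_notin.
  apply: leq_trans (geq_minl _ _) (leq_trans geUV (dimvS _)).
  exact: addvS (addvSl _ _) (subvv _).
Qed.

(* Each added vector is taken outside [U + V] until that sum is the whole space. *)
Lemma extend_subspace U V r : \dim U + r <= \dim {:vT} ->
  exists2 W, (U <= W)%VS &
    \dim W = \dim U + r /\ minn (\dim {:vT}) (\dim (U + V) + r) <= \dim (W + V).
Proof.
elim: r U => [|r IHr] U leUr.
  by exists U => //; rewrite !addn0 geq_minr.
have [W1 sUW1 [dW1 leW1]] := extend_subspace1 V (ltac:(lia) : \dim U < \dim {:vT}).
have [W sW1W [dW leW]] := IHr W1 (ltac:(lia)).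
exists W; first exact: subv_trans sUW1 sW1W.
lia.
Qed.

Lemma exists_vspace_dim m : m <= \dim {:vT} -> exists U : {vspace vT}, \dim U = m.
Proof.
move=> lem; have [U _ [dU _]] :=
  extend_subspace (U := 0%VS) 0%VS (r := m) (ltac:(rewrite dimv0; lia)).
by exists U; rewrite dU dimv0.
Qed.

Lemma extend_pair_cap T1 T2 m :
    \dim T1 <= m -> \dim T2 <= m -> m <= \dim {:vT} ->
  exists B1 B2, [/\ (T1 <= B1)%VS, (T2 <= B2)%VS, \dim B1 = m, \dim B2 = m &
    \dim (B1 :&: B2) <= maxn (\dim (T1 :&: T2)) (m + m - \dim {:vT})].
Proof.
move=> leT1 leT2 lemN.
have [B1 sTB1 [dB1 leB1]] := extend_subspace (U := T1) T2 (r := m - \dim T1) (ltac:(lia)).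
have [B2 sTB2 [dB2 leB2]] := extend_subspace (U := T2) B1 (r := m - \dim T2) (ltac:(lia)).
exists B1, B2; split=> //; [lia | lia |].
rewrite [(T2 + B1)%VS]addvC [(B2 + B1)%VS]addvC in leB2.
have := dimv_sum_cap T1 T2; have := dimv_sum_cap B1 B2; lia.
Qed.

End Extension.

Lemma dimvf_row (K : fieldType) m : \dim {:'rV[K]_m} = m.
Proof. by rewrite dimvf /dim /= mul1n. Qed.

Section MaximalFamily.
Variables (F : finFieldType) (n k t : nat) (S : PGspace F n -> Prop).

Lemma meets_allS T B : meets_all t S T -> (T <= B)%VS -> meets_all t S B.
Proof. by move=> mT sTB A SA; apply: leq_trans (mT A SA) (dimvS (capvS sTB (subvv A))). Qed.

Hypotheses (le_t_k : t <= k) (maxS : maximal_t_intersecting k t S).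

Lemma maximal_mem B : is_kspace k B -> meets_all t S B -> S B.
Proof.
have [[Sk Sint] Smax] := maxS.
move=> kB mB; apply: NNPP => nSB; apply: (Smax B kB nSB); split.
  by move=> U [/Sk | ->].
rewrite /meet_t; move=> U V [SU | ->] [SV | ->].
- exact: Sint.
- by rewrite capvC; apply: mB.
- exact: mB.
- by rewrite capvv kB.
Qed.

Lemma maximal_nonempty : k <= n -> exists A, S A.
Proof.
move=> le_k_n; have [B kB] : exists B : PGspace F n, is_kspace k B.
  by apply: exists_vspace_dim; rewrite dimvf_row.
apply: NNPP => noS; apply: (noS); exists B; apply: maximal_mem => // A SA.
by case: noS; exists A.
Qed.

Lemma is_psi_bounds p : k <= n -> is_psi t S p -> t <= p <= k.
Proof.
move=> le_k_n [[T [dT mT]] minp]; have [[Sk Sint] _] := maxS.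
have [A SA] := maximal_nonempty le_k_n.
have ltp : p < k.+1 by rewrite -(Sk A SA); apply: minp => A' /(Sint A A' SA).
have := mT A SA; have := dimvS (capvSl T A); rewrite /meet_t dT; lia.
Qed.

Lemma is_psi_pencil : is_psi t S t -> is_t_pencil k t S.
Proof.
move=> [[T [dT mT]] _]; have [[Sk _] _] := maxS.
exists T; split=> // U; split => [SU | [kU sTU]].
  split; first exact: Sk.
  by apply/capv_idPl/eqP; rewrite eqEdim capvSl dT; apply: mT.
exact: maximal_mem (meets_allS mT sTU).
Qed.

Lemma meets_all_meet_t T1 T2 : 2 * k - t < n ->
    \dim T1 <= k.+1 -> \dim T2 <= k.+1 ->
  meets_all t S T1 -> meets_all t S T2 -> meet_t t T1 T2.
Proof.
move=> lt_n leT1 leT2 m1 m2; have [[_ Sint] _] := maxS.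
rewrite /meet_t leqNgt; apply/negP => smallT.
have [B1 [B2 [sTB1 sTB2 kB1 kB2 capB]]] :=
  extend_pair_cap leT1 leT2 (ltac:(rewrite dimvf_row; lia)).
have SB1 := maximal_mem kB1 (meets_allS m1 sTB1).
have SB2 := maximal_mem kB2 (meets_allS m2 sTB2).
have := Sint B1 B2 SB1 SB2; rewrite /meet_t dimvf_row in capB *; lia.
Qed.

End MaximalFamily.

Theorem mainTheorem8 (F : finFieldType) (n k t : nat)
  (S : PGspace F n -> Prop) (p : nat) :
  (t.+1 < k)%N -> (2 * k - t < n)%N ->
  maximal_t_intersecting k t S ->
  is_psi t S p ->
  [/\ ((t <= p)%N /\ (p <= k)%N /\ (p = t -> is_t_pencil k t S)),
      (forall T, calT t S p T ->
         forall B, is_kspace k B -> (T <= B)%VS -> S B)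
    & (forall T1 T2, calT t S p T1 -> calT t S p T2 -> meet_t t T1 T2)].
Proof.
move=> lt_t1_k lt_n maxS psiS.
have le_t_k : t <= k by lia.
have le_k_n : k <= n by lia.
have /andP[le_t_p le_p_k] := is_psi_bounds le_t_k maxS le_k_n psiS.
split.
- do 2!split=> //.
  by move=> eq_pt; subst t; apply: is_psi_pencil le_t_k maxS psiS.
- move=> T [_ mT] B kB sTB.
  exact: (maximal_mem le_t_k maxS kB (meets_allS mT sTB)).
- move=> T1 T2 [dT1 mT1] [dT2 mT2].
  by apply: (meets_all_meet_t le_t_k maxS lt_n) mT1 mT2; rewrite ?dT1 ?dT2.
Qed.
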